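(* Let $\boldsymbol{\mu}$ and $\boldsymbol{\mu}^*$ be anchor partitions of $\{1,\dots,n\}$, and let $\boldsymbol{\omega}=(\omega_1,\dots,\omega_n)$ be a shrinkage vector. Suppose that for every $i$ and $j$ with $\omega_i>0$ and $\omega_j>0$, we have $\mu_i=\mu_j$ if and only if $\mu^*_i=\mu^*_j$. If $\boldsymbol{\pi}_1\sim SP(\boldsymbol{\mu},\boldsymbol{\omega},\boldsymbol{\sigma},\psi,p_\text{b})$ and $\boldsymbol{\pi}_2\sim SP(\boldsymbol{\mu}^*,\boldsymbol{\omega},\boldsymbol{\sigma},\psi,p_\text{b})$, then $\boldsymbol{\pi}_1$ and $\boldsymbol{\pi}_2$ are equal in distribution.
   Context: Partitions of $\{1,\dots,n\}$ are encoded as vectors of cluster labels $\boldsymbol{\pi}=(\pi_1,\dots,\pi_n)$ in canonical form: item 1 gets label 1, and each subsequent item that is not clustered with an earlier item gets the next unused integer. Two items share a label iff they are in the same cluster. Shrinkage partition (SP) distribution. The ingredients are: - an anchor partition $\boldsymbol{\mu}=(\mu_1,\dots,\mu_n)$; - a shrinkage vector $\boldsymbol{\omega}=(\omega_1,\dots,\omega_n)$ with $\omega_i\ge0$; - a permutation $\boldsymbol{\sigma}$ of $\{1,\dots,n\}$, giving the allocation order (the $k$-th item allocated is $\sigma_k$); - a grit parameter $\psi\in\mathbb{R}$; - a baseline partition distribution $p_\text{b}$ given by a conditional allocation probability function $\Pr_\text{b}(\pi_{\sigma_k}=c\mid\pi_{\sigma_1},\dots,\pi_{\sigma_{k-1}})$,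 so that $p_\text{b}(\boldsymbol{\pi})=\prod_k\Pr_\text{b}(\pi_{\sigma_k}\mid\cdot)$. At step $k\ge2$, the admissible values of $c$ are the existing labels $\{\pi_{\sigma_1},\dots,\pi_{\sigma_{k-1}}\}$ and the new label $|\{\pi_{\sigma_1},\dots,\pi_{\sigma_{k-1}}\}|+1$. The anchor factor is $$\Pr_\text{a}(\pi_{\sigma_k}=c\mid\cdot)\propto\exp\!\Big(\frac{\omega_{\sigma_k}}{(k-1)^2}\Big[\Big(\sum_{j=1}^{k-1}\omega_{\sigma_j}I\{\pi_{\sigma_j}=c\}I\{\mu_{\sigma_j}=\mu_{\sigma_k}\}\Big)^2-\psi\Big(\sum_{j=1}^{k-1}\omega_{\sigma_j}I\{\pi_{\sigma_j}=c\}\Big)^2\Big]\Big).$$ The SP allocation probability is $\Pr_\text{sp}(\pi_{\sigma_k}=c\mid\cdot)\propto\Pr_\text{b}(\pi_{\sigma_k}=c\mid\cdot)\Pr_\text{a}(\pi_{\sigma_k}=c\mid\cdot)$, normalized over the admissible $c$. The first item gets label 1. The pmf is $p_\text{sp}(\boldsymbol{\pi}\mid\boldsymbol{\mu},\boldsymbol{\omega},\boldsymbol{\sigma},\psi,p_\text{b})=\prod_{k=2}^n\Pr_\text{sp}(\pi_{\sigma_k}\mid\cdot)$, and this distribution is denoted $SP(\boldsymbol{\mu},\boldsymbol{\omega},\boldsymbol{\sigma},\psi,p_\text{b})$. *)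

From HB Require Import structures.
From mathcomp Require Import all_boot all_order all_algebra all_fingroup.
From mathcomp Require Import all_classical all_reals all_analysis.
Set Implicit Arguments. Unset Strict Implicit. Unset Printing Implicit Defensive.
Import Order.TTheory GRing.Theory Num.Theory.
Local Open Scope ring_scope.

Section SP.
Variables (R : realType) (n : nat).

(* A partition / label vector: item i : 'I_n gets label part i. *)
Definition labvec := 'I_n -> nat.

Definition canonical_form (part : labvec) : Prop :=
  forall i : 'I_n,
    let prev := undup (map part [seq j : 'I_n <- enum 'I_n | (j < i)%N]) in
    (part i \in prev) || (part i == (size prev).+1)%N.

(* A baseline conditional allocation probability: given the item being
   allocated and the history (items allocated so far with their labvec, in
   allocation order), a probability on candidate labvec c. *)
Definition baseline := 'I_n -> seq ('I_n * nat) -> nat -> R.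

Definition hist_labels (h : seq ('I_n * nat)) : seq nat := undup (map snd h).
Definition adm_list (h : seq ('I_n * nat)) : seq nat :=
  rcons (hist_labels h) (size (hist_labels h)).+1.

Definition valid_baseline (pb : baseline) : Prop :=
  (forall x h c, 0 <= pb x h c) /\
  (forall x h, \sum_(c <- adm_list h) pb x h c = 1).

(* sigma : 'S_n; the k-th allocated item (k : 'I_n, 0-based) is sigma k. *)
Definition earlier (sigma : 'S_n) (k : 'I_n) : seq 'I_n :=
  map sigma [seq j : 'I_n <- enum 'I_n | (j < k)%N].

Definition history (sigma : 'S_n) (part : labvec) (k : 'I_n) : seq ('I_n * nat) :=
  [seq (x, part x) | x <- earlier sigma k].

(* Anchor factor at (0-based) step k (i.e. paper's step k+1, so (k+1)-1 = k
   earlier items), for candidate label c. *)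
Definition anchor_factor (mu : labvec) (omega : 'I_n -> R) (sigma : 'S_n)
    (psi : R) (part : labvec) (k : 'I_n) (c : nat) : R :=
  let x := sigma k in
  expR (omega x / (k%:R ^+ 2) *
    ((\sum_(j <- earlier sigma k)
        omega j * (part j == c)%:R * (mu j == mu x)%:R) ^+ 2
     - psi * (\sum_(j <- earlier sigma k) omega j * (part j == c)%:R) ^+ 2)).

Definition sp_unnorm (mu : labvec) (omega : 'I_n -> R) (sigma : 'S_n) (psi : R)
    (pb : baseline) (part : labvec) (k : 'I_n) (c : nat) : R :=
  pb (sigma k) (history sigma part k) c * anchor_factor mu omega sigma psi part k c.

Definition sp_alloc (mu : labvec) (omega : 'I_n -> R) (sigma : 'S_n) (psi : R)
    (pb : baseline) (part : labvec) (k : 'I_n) (c : nat) : R :=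
  let h := history sigma part k in
  if c \in adm_list h then
    sp_unnorm mu omega sigma psi pb part k c /
      \sum_(c' <- adm_list h) sp_unnorm mu omega sigma psi pb part k c'
  else 0.

Definition sp_pmf (mu : labvec) (omega : 'I_n -> R) (sigma : 'S_n) (psi : R)
    (pb : baseline) (part : labvec) : R :=
  \prod_(k : 'I_n)
     (if (k == 0 :> nat) then (part (sigma k) == 1)%:R
      else sp_alloc mu omega sigma psi pb part k (part (sigma k))).

End SP.

From HB Require Import structures.
From mathcomp Require Import all_boot all_order all_algebra all_fingroup.
From mathcomp Require Import all_classical all_reals all_analysis.
Import Order.TTheory GRing.Theory Num.Theory.
Local Open Scope ring_scope.

(* The anchor partition enters the SP distribution only through the anchor
   factor, and there only through the indicators [mu j == mu x] multiplied by
   omega j * omega x.  Items of weight zero therefore never see the anchor, and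
   on items of positive weight mu and mu' induce the same equivalence. *)

Lemma sp_alloc_eq_anchor (R : realType) (n : nat) (mu mu' : labvec n)
    (omega : 'I_n -> R) (sigma : 'S_n) (psi : R) (pb : baseline R n)
    (part : labvec n) (k : 'I_n) (c : nat) :
  (forall c', anchor_factor mu omega sigma psi part k c' =
              anchor_factor mu' omega sigma psi part k c') ->
  sp_alloc mu omega sigma psi pb part k c =
  sp_alloc mu' omega sigma psi pb part k c.
Proof.
move=> eq_anchor; rewrite /sp_alloc /sp_unnorm eq_anchor.
by under eq_bigr => c' _ do rewrite eq_anchor.
Qed.

Lemma sp_pmf_eq_anchor (R : realType) (n : nat) (mu mu' : labvec n)
    (omega : 'I_n -> R) (sigma : 'S_n) (psi : R) (pb : baseline R n)
    (part : labvec n) :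
  (forall k c, anchor_factor mu omega sigma psi part k c =
               anchor_factor mu' omega sigma psi part k c) ->
  sp_pmf mu omega sigma psi pb part = sp_pmf mu' omega sigma psi pb part.
Proof.
move=> eq_anchor; apply: eq_bigr => k _.
by case: ifP => // _; apply: sp_alloc_eq_anchor.
Qed.

Section AnchorOnPositiveWeights.

Variables (R : realType) (n : nat) (mu mu' : labvec n) (omega : 'I_n -> R).
Hypothesis omega_ge0 : forall i, 0 <= omega i.
Hypothesis mu_mu'_positive :
  forall i j, 0 < omega i -> 0 < omega j -> (mu i == mu j) = (mu' i == mu' j).

Lemma weight_eq0_or_gt0 (i : 'I_n) : omega i = 0 \/ 0 < omega i.
Proof. by have := omega_ge0 i; rewrite le0r => /orP[/eqP|]; [left | right]. Qed.

Lemma anchor_factor_positive_weights (sigma : 'S_n) (psi : R)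
    (part : labvec n) (k : 'I_n) (c : nat) :
  anchor_factor mu omega sigma psi part k c =
  anchor_factor mu' omega sigma psi part k c.
Proof.
rewrite /anchor_factor.
have [->|omega_x_gt0] := weight_eq0_or_gt0 (sigma k); first by rewrite !mul0r.
congr (expR (_ * (_ ^+ 2 - _))); apply: eq_bigr => j _.
have [->|omega_j_gt0] := weight_eq0_or_gt0 j; first by rewrite !mul0r.
by rewrite mu_mu'_positive.
Qed.

End AnchorOnPositiveWeights.

Theorem theorem4 (R : realType) (n : nat) (mu mu' : labvec n)
    (omega : 'I_n -> R) (sigma : 'S_n) (psi : R) (pb : baseline R n) :
  canonical_form mu -> canonical_form mu' ->
  (forall i, 0 <= omega i) ->
  valid_baseline pb ->
  (forall i j : 'I_n, 0 < omega i -> 0 < omega j ->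
     (mu i == mu j) = (mu' i == mu' j)) ->
  forall part : labvec n,
    sp_pmf mu omega sigma psi pb part = sp_pmf mu' omega sigma psi pb part.
Proof.
(* The pmfs agree pointwise. *)
move=> _ _ omega_ge0 _ mu_mu'_positive part.
apply: sp_pmf_eq_anchor => k c.
exact: anchor_factor_positive_weights.
Qed.
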